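(* Consider the setting and the algorithm described in the context (with its parameters $0<\beta<2$, $\nu>0$, $0<q<1$, $\delta_0>0$, $\theta_0>0$, $\gamma_0=1$, $\varepsilon>0$). Then: (i) $\|z^{k+1}\|\le \ell+1$ for all $k\ge 0$; (ii) in every iteration, the search for the smallest $j_k\in\{0,1,2,\dots\}$ with $\theta_{k+1}>0$ terminates after finitely many steps, so the algorithm is well defined; moreover $\gamma_{k+1}\le\gamma_k$ for all $k\ge0$; (iii) there exist a constant $\gamma>0$ and an index $K_0\ge 0$ such that for all $k\ge K_0$: $\gamma_k=\gamma$, $\delta_k=\delta:=2\nu+L_{\nabla h}+\frac{2\|A\|^2}{\gamma}$, and $\|z^{k+1}\|\le\min\left(\frac{\varepsilon}{\gamma},\sqrt{\frac{2\varepsilon}{\gamma}}\right)$.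
   Context: Setting: $\mathcal{S}\subseteq\mathbb{R}^n$ is nonempty, convex and compact; $A:\mathbb{R}^n\to\mathbb{R}^s$ and $K:\mathbb{R}^n\to\mathbb{R}^p$ are linear with adjoints $A^*,K^*$ and operator norms $\|A\|,\|K\|$; $g:\mathbb{R}^s\to\mathbb{R}\cup\{+\infty\}$ is proper, convex, lower semicontinuous; $h:\mathbb{R}^n\to\mathbb{R}$ is differentiable on an open set containing $\mathcal{S}$ with $\nabla h$ Lipschitz there with constant $L_{\nabla h}$; $f:\mathbb{R}^p\to\mathbb{R}\cup\{+\infty\}$ is proper, convex, lower semicontinuous with $K(\mathcal{S})\subseteq\operatorname{int}(\operatorname{dom}f)$ and $f(Kx)>0$ for all $x\in\mathcal{S}$; $\mathcal{S}\cap A^{-1}(\operatorname{dom}g)\neq\emptyset$ and $\alpha:=\inf_{x\in\mathcal{S}}\{g(Ax)+h(x)\}>0$. Moreover $A(\mathcal{S})\subseteq\operatorname{dom}(\partial g)$ and there is $\ell>0$ with $\operatorname{dist}(0,\partial g(Ax))\le\ell$ for all $x\in\mathcal{S}$. Notation: $g^*$ is the Fenchel conjugate of $g$; $\iota_{\mathcal{S}}$ the indicator function of $\mathcal{S}$; $\operatorname{Proj}_{\mathcal{S}}$ the Euclidean projection; for a proper convex lsc $\varphi$ and $\kappa>0$, $\operatorname{prox}_{\varphi,\kappa}(x)=\arg\min_y\{\varphi(y)+\frac{1}{2\kappa}\|y-x\|^2\}$. Define $\Psi(x,z,u,\delta,\gamma):=\langle z,Ax\rangle-g^*(z)+h(x)+\iota_{\mathcal{S}}(x)+\frac{\delta}{2}\|x-u\|^2-\frac{\gamma}{2}\|z\|^2$.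 Algorithm (Adaptive FSPS): given $0<\beta<2$, $\nu>0$, $0<q<1$, $\delta_0>0$, $\theta_0>0$, $\gamma_0=1$, $\varepsilon>0$ and a starting point $(x^0,z^0,u^0)$, for $k\ge0$: choose $y^{k+1}\in\partial f(Kx^k)$; set $x^{k+1}:=\operatorname{Proj}_{\mathcal{S}}\big(u^k+\frac{\theta_k}{\delta_k}K^*y^{k+1}-\frac1{\delta_k}\nabla h(x^k)-\frac1{\delta_k}A^*z^k\big)$; set $u^{k+1}:=(1-\beta)u^k+\beta x^{k+1}$; find the smallest $j_k\in\{0,1,2,\dots\}$ such that, with $\gamma_{k,j_k}:=\gamma_kq^{j_k}$ and $z^{k+1,j_k}:=\operatorname{prox}_{g^*,1/\gamma_{k,j_k}}(Ax^{k+1}/\gamma_{k,j_k})$, one has $\theta_{k+1}:=\Psi(x^{k+1},z^{k+1,j_k},u^{k+1},\delta_k,\gamma_{k,j_k})/f(Kx^{k+1})>0$; set $\gamma_{k+1}:=\gamma_{k,j_k}$, $\delta_{k+1}:=2\nu+L_{\nabla h}+2\|A\|^2/\gamma_{k+1}$, $z^{k+1}:=z^{k+1,j_k}$; if $\|z^{k+1}\|>\min(\varepsilon/\gamma_{k+1},\sqrt{2\varepsilon/\gamma_{k+1}})$, then replace $\gamma_{k+1}$ by $\gamma_{k+1}q$ and recompute $\delta_{k+1}:=2\nu+L_{\nabla h}+2\|A\|^2/\gamma_{k+1}$. *)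

(* R^n is modelled by row vectors 'rV[R]_n,
   linear maps R^n -> R^s by matrices 'M[R]_(n,s) acting on the right (x |-> x *m A),
   adjoints by transposition (z |-> z *m A^T). *)
From HB Require Import structures.
From mathcomp Require Import all_boot all_order all_algebra.
From mathcomp Require Import all_classical all_reals all_analysis.
Set Implicit Arguments. Unset Strict Implicit. Unset Printing Implicit Defensive.
Import Order.TTheory GRing.Theory Num.Theory.
Import numFieldNormedType.Exports.
Local Open Scope classical_set_scope.
Local Open Scope ring_scope.

Section Defs.
Variable R : realType.

Definition dot {m : nat} (u v : 'rV[R]_m) : R := (u *m v^T) 0 0.
Definition enorm {m : nat} (v : 'rV[R]_m) : R := Num.sqrt (dot v v).

Definition opnorm {m k : nat} (A : 'M[R]_(m, k)) : R :=
  sup [set enorm (x *m A) | x in [set x : 'rV[R]_m | enorm x <= 1]].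

Definition convex_set_ {m : nat} (S : set 'rV[R]_m) : Prop :=
  forall (x y : 'rV[R]_m) (t : R), S x -> S y -> 0 <= t <= 1 -> S (t *: x + (1 - t) *: y).

Definition edom {m : nat} (phi : 'rV[R]_m -> \bar R) : set 'rV[R]_m :=
  [set x | (phi x < +oo)%E].
Definition eproper {m : nat} (phi : 'rV[R]_m -> \bar R) : Prop :=
  (exists x, (phi x < +oo)%E) /\ (forall x, phi x <> -oo%E).
Definition econvex {m : nat} (phi : 'rV[R]_m -> \bar R) : Prop :=
  forall (x y : 'rV[R]_m) (t : R), 0 < t < 1 ->
    (phi (t *: x + (1 - t) *: y)%R <= t%:E * phi x + (1 - t)%:E * phi y)%E.
Definition elsc {m : nat} (phi : 'rV[R]_m -> \bar R) : Prop :=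
  forall x (a : R), (a%:E < phi x)%E -> \forall y \near x, (a%:E < phi y)%E.

Definition subdiff {m : nat} (phi : 'rV[R]_m -> \bar R) (u z : 'rV[R]_m) : Prop :=
  phi u \is a fin_num /\ forall w, (phi u + (dot z (w - u)%R)%:E <= phi w)%E.

Definition dist0_subdiff {m : nat} (phi : 'rV[R]_m -> \bar R) (u : 'rV[R]_m) : R :=
  inf [set enorm z | z in subdiff phi u].

Definition fconj {m : nat} (phi : 'rV[R]_m -> \bar R) (z : 'rV[R]_m) : \bar R :=
  ereal_sup [set ((dot z u)%:E - phi u)%E | u in [set: 'rV[R]_m]].

Definition is_prox {m : nat} (phi : 'rV[R]_m -> \bar R) (kappa : R) (x y : 'rV[R]_m) : Prop :=
  forall w, (phi y + ((2 * kappa)^-1 * enorm (y - x) ^+ 2)%:E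
             <= phi w + ((2 * kappa)^-1 * enorm (w - x) ^+ 2)%:E)%E.

Definition is_proj {m : nat} (S : set 'rV[R]_m) (x y : 'rV[R]_m) : Prop :=
  S y /\ forall w, S w -> enorm (x - y) <= enorm (x - w).

Definition indic {m : nat} (S : set 'rV[R]_m) (x : 'rV[R]_m) : \bar R :=
  if `[< S x >] then 0%E else +oo%E.

Definition has_gradient_on {m : nat} (U : set 'rV[R]_m) (h : 'rV[R]_m -> R)
  (gradh : 'rV[R]_m -> 'rV[R]_m) : Prop :=
  forall x, U x -> differentiable h x /\ forall v, 'd h x v = dot (gradh x) v.

Definition lipschitz_on {m : nat} (U : set 'rV[R]_m) (F : 'rV[R]_m -> 'rV[R]_m) (L : R) : Prop :=
  forall x y, U x -> U y -> enorm (F x - F y) <= L * enorm (x - y).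

Definition Psi {n s : nat} (S : set 'rV[R]_n) (A : 'M[R]_(n, s))
  (g : 'rV[R]_s -> \bar R) (h : 'rV[R]_n -> R)
  (x : 'rV[R]_n) (z : 'rV[R]_s) (u : 'rV[R]_n) (delta gamma : R) : \bar R :=
  ((dot z (x *m A))%:E - fconj g z + (h x)%:E + indic S x
   + (delta / 2 * enorm (x - u) ^+ 2)%:E - (gamma / 2 * enorm z ^+ 2)%:E)%E.

Definition fsps_setting {n s p : nat} (S : set 'rV[R]_n) (A : 'M[R]_(n, s))
  (K : 'M[R]_(n, p)) (g : 'rV[R]_s -> \bar R) (h : 'rV[R]_n -> R)
  (gradh : 'rV[R]_n -> 'rV[R]_n) (L : R) (f : 'rV[R]_p -> \bar R) (ell : R) : Prop :=
  [/\ (S !=set0) /\ convex_set_ S /\ compact S,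
      eproper g /\ econvex g /\ elsc g,
      (exists U, open U /\ S `<=` U /\ has_gradient_on U h gradh
                 /\ 0 <= L /\ lipschitz_on U gradh L),
      eproper f /\ econvex f /\ elsc f
        /\ (forall x, S x -> interior (edom f) (x *m K))
        /\ (forall x, S x -> (0 < f (x *m K))%E)
      & [/\ exists x, S x /\ edom g (x *m A),
            (0 < ereal_inf [set (g (x *m A) + (h x)%:E)%E | x in S])%E,
            (forall x, S x -> exists z, subdiff g (x *m A) z),
            0 < ell
          & forall x, S x -> dist0_subdiff g (x *m A) <= ell]].

Definition fsps_pre {n s p : nat} (S : set 'rV[R]_n) (A : 'M[R]_(n, s))
  (K : 'M[R]_(n, p)) (gradh : 'rV[R]_n -> 'rV[R]_n) (f : 'rV[R]_p -> \bar R)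
  (beta : R) (xk : 'rV[R]_n) (zk : 'rV[R]_s) (uk : 'rV[R]_n) (thk dk : R)
  (y : 'rV[R]_p) (x' u' : 'rV[R]_n) : Prop :=
  [/\ subdiff f (xk *m K) y,
      is_proj S (uk + (thk / dk) *: (y *m K^T) - dk^-1 *: gradh xk
                   - dk^-1 *: (zk *m A^T)) x'
    & u' = (1 - beta) *: uk + beta *: x'].

Definition fsps_theta {n s p : nat} (S : set 'rV[R]_n) (A : 'M[R]_(n, s))
  (K : 'M[R]_(n, p)) (g : 'rV[R]_s -> \bar R) (h : 'rV[R]_n -> R)
  (f : 'rV[R]_p -> \bar R) (x' : 'rV[R]_n) (z : 'rV[R]_s) (u' : 'rV[R]_n)
  (dk gkj : R) : \bar R :=
  (Psi S A g h x' z u' dk gkj * ((fine (f (x' *m K)))^-1)%:E)%E.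

Definition fsps_cond {n s p : nat} (S : set 'rV[R]_n) (A : 'M[R]_(n, s))
  (K : 'M[R]_(n, p)) (g : 'rV[R]_s -> \bar R) (h : 'rV[R]_n -> R)
  (f : 'rV[R]_p -> \bar R) (q : R)
  (x' u' : 'rV[R]_n) (dk gk : R) (j : nat) : Prop :=
  exists z, is_prox (fconj g) (gk * q ^+ j)^-1 ((gk * q ^+ j)^-1 *: (x' *m A)) z
         /\ (0 < fsps_theta S A K g h f x' z u' dk (gk * q ^+ j))%E.

Definition fsps_step {n s p : nat} (S : set 'rV[R]_n) (A : 'M[R]_(n, s))
  (K : 'M[R]_(n, p)) (g : 'rV[R]_s -> \bar R) (h : 'rV[R]_n -> R)
  (gradh : 'rV[R]_n -> 'rV[R]_n) (L : R) (f : 'rV[R]_p -> \bar R)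
  (beta nu q eps : R)
  (xk : 'rV[R]_n) (zk : 'rV[R]_s) (uk : 'rV[R]_n) (thk dk gk : R)
  (y : 'rV[R]_p) (x' : 'rV[R]_n) (z' : 'rV[R]_s) (u' : 'rV[R]_n)
  (j : nat) (th' d' g' : R) : Prop :=
  let gkj := gk * q ^+ j in
  [/\ fsps_pre S A K gradh f beta xk zk uk thk dk y x' u',
      fsps_cond S A K g h f q x' u' dk gk j
        /\ (forall j', (j' < j)%N -> ~ fsps_cond S A K g h f q x' u' dk gk j'),
      is_prox (fconj g) gkj^-1 (gkj^-1 *: (x' *m A)) z'
        /\ th'%:E = fsps_theta S A K g h f x' z' u' dk gkj,
      g' = (if Num.min (eps / gkj) (Num.sqrt (2 * eps / gkj)) < enorm z'
            then gkj * q else gkj)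
    & d' = 2 * nu + L + 2 * opnorm A ^+ 2 / g'].

Definition fsps_run_upto {n s p : nat} (S : set 'rV[R]_n) (A : 'M[R]_(n, s))
  (K : 'M[R]_(n, p)) (g : 'rV[R]_s -> \bar R) (h : 'rV[R]_n -> R)
  (gradh : 'rV[R]_n -> 'rV[R]_n) (L : R) (f : 'rV[R]_p -> \bar R)
  (beta nu q eps delta0 theta0 : R) (x0 : 'rV[R]_n) (z0 : 'rV[R]_s) (u0 : 'rV[R]_n)
  (x : nat -> 'rV[R]_n) (z : nat -> 'rV[R]_s) (u : nat -> 'rV[R]_n)
  (y : nat -> 'rV[R]_p) (j : nat -> nat) (theta delta gamma : nat -> R)
  (N : nat) : Prop :=
  [/\ x 0%N = x0, z 0%N = z0, u 0%N = u0,
      [/\ theta 0%N = theta0, delta 0%N = delta0 & gamma 0%N = 1]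
    & forall k, (k < N)%N ->
        fsps_step S A K g h gradh L f beta nu q eps
          (x k) (z k) (u k) (theta k) (delta k) (gamma k)
          (y k.+1) (x k.+1) (z k.+1) (u k.+1) (j k) (theta k.+1) (delta k.+1) (gamma k.+1)].

End Defs.

From Pilot Require Import Defs.
From HB Require Import structures.
From mathcomp Require Import all_boot all_order all_algebra.
From mathcomp Require Import all_classical all_reals all_analysis.
From mathcomp Require Import ring lra.
Import Order.TTheory GRing.Theory Num.Theory.
Import numFieldNormedType.Exports.
Local Open Scope classical_set_scope.
Local Open Scope ring_scope.

(* The prox point z = prox_{g^*,1/gam}(A x / gam) is compared with any subgradient
   v of g at A x: its dual value <z, A x> - g^*(z) - gam |z|^2 / 2 is at least
   g(A x) - gam |v|^2 / 2, and |z| <= |v|.  Choosing |v| < ell + 1 gives (i), and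
   Psi >= alpha - gam (ell + 1)^2 / 2 > 0 once gam <= alpha / (ell + 1)^2, so the
   line search stops after finitely many reductions by q (ii).  The gamma_k never
   increase, every change multiplies them by at most q, and below the threshold
   min (alpha / (ell + 1)^2, eps / (ell + 1), 2 eps / (ell + 1)^2) neither the line
   search nor the final test shrinks them; hence they are eventually constant (iii).
   The prox point exists because g + |. - a|^2 / (2 gam) is lower semicontinuous
   and coercive, so it attains its infimum on a compact sublevel set. *)

Set Implicit Arguments. Unset Strict Implicit. Unset Printing Implicit Defensive.

Section Euclidean.
Variables (R : realType) (m : nat).
Implicit Types u v w : 'rV[R]_m.

Lemma dotE u v : dot u v = \sum_j u 0 j * v 0 j.
Proof. by rewrite /dot !mxE; apply: eq_bigr => j _; rewrite mxE. Qed.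

Lemma dotC u v : dot u v = dot v u.
Proof. by rewrite !dotE; apply: eq_bigr => j _; rewrite mulrC. Qed.

Lemma dotDl u v w : dot (u + v) w = dot u w + dot v w.
Proof. by rewrite !dotE -big_split; apply: eq_bigr => j _; rewrite mxE mulrDl. Qed.

Lemma dotDr u v w : dot w (u + v) = dot w u + dot w v.
Proof. by rewrite dotC dotDl !(dotC w). Qed.

Lemma dotZl (a : R) u v : dot (a *: u) v = a * dot u v.
Proof. by rewrite !dotE mulr_sumr; apply: eq_bigr => j _; rewrite mxE mulrA. Qed.

Lemma dotZr (a : R) u v : dot v (a *: u) = a * dot v u.
Proof. by rewrite dotC dotZl dotC. Qed.

Lemma dotNl u v : dot (- u) v = - dot u v.
Proof. by rewrite -scaleN1r dotZl mulN1r. Qed.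

Lemma dotBl u v w : dot (u - v) w = dot u w - dot v w.
Proof. by rewrite dotDl dotNl. Qed.

Lemma dotBr u v w : dot w (u - v) = dot w u - dot w v.
Proof. by rewrite !(dotC w) dotBl. Qed.

Lemma dotDD u v : dot (u + v) (u + v) = dot u u + 2 * dot u v + dot v v.
Proof. rewrite dotDl !dotDr (dotC v u); ring. Qed.

Lemma dotBB u v : dot (u - v) (u - v) = dot u u - 2 * dot u v + dot v v.
Proof. rewrite dotBl !dotBr (dotC v u); ring. Qed.

Lemma coord_sqr_le_dot u i : u 0 i ^+ 2 <= dot u u.
Proof.
rewrite dotE (bigD1 i) //= -expr2 lerDl.
by apply: sumr_ge0 => j _; rewrite -expr2 sqr_ge0.
Qed.

Lemma dot_ge0 u : 0 <= dot u u.
Proof. by rewrite dotE; apply: sumr_ge0 => j _; rewrite -expr2 sqr_ge0. Qed.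

Lemma enorm_ge0 u : 0 <= enorm u.
Proof. exact: sqrtr_ge0. Qed.

Lemma enorm_sqr u : enorm u ^+ 2 = dot u u.
Proof. by rewrite /enorm sqr_sqrtr // dot_ge0. Qed.

Lemma enorm_le u v : dot u u <= dot v v -> enorm u <= enorm v.
Proof. by move=> uv; rewrite /enorm ler_sqrt // dot_ge0. Qed.

Lemma dot_lt_sqr u (r : R) : enorm u < r -> dot u u < r ^+ 2.
Proof.
move=> ur; rewrite -enorm_sqr ltr_pXn2r ?nnegrE ?enorm_ge0 //.
exact: le_trans (enorm_ge0 u) (ltW ur).
Qed.

Lemma mx_norm_le_enorm u : `|u| <= enorm u.
Proof.
rewrite [leLHS]/Num.norm /= mx_normrE.
apply: bigmax_le => [|[i j] _ /=]; first exact: enorm_ge0.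
rewrite (ord1 i) -(ler_pXn2r (n := 2)) ?nnegrE ?enorm_ge0 //.
by rewrite enorm_sqr real_normK ?num_real // coord_sqr_le_dot.
Qed.

End Euclidean.

Section FenchelConjugate.
Variables (R : realType) (m : nat) (g : 'rV[R]_m -> \bar R).
Implicit Types a v w z : 'rV[R]_m.

Lemma fenchel_young w a : ((dot w a)%:E - g a <= fconj g w)%E.
Proof. by apply: ereal_sup_ubound; exists a. Qed.

Lemma fconj_subdiff a v : subdiff g a v -> fconj g v = ((dot v a)%:E - g a)%E.
Proof.
case=> ga sv; apply/eqP; rewrite eq_le fenchel_young andbT.
apply: ge_ereal_sup => _ [u _ <-].
have := sv u; rewrite -(fineK ga); case: (g u) => [r| |] /=.
- by rewrite -EFinD !lee_fin dotBr => ?; lra.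
- by rewrite addeNy leNye.
- by rewrite -EFinD leeNy_eq.
Qed.

Lemma prox_penaltyE (gam : R) w a : gam != 0 ->
  (2 * gam^-1)^-1 * enorm (w - gam^-1 *: a) ^+ 2
  = gam / 2 * dot w w - dot w a + (2 * gam)^-1 * dot a a.
Proof. by move=> gam0; rewrite enorm_sqr dotBB !dotZr dotZl; field; rewrite gam0. Qed.

(* Compare the prox objective at [z] and at [v], whose conjugate value is known. *)
Lemma prox_fconj_bound (gam : R) a v z : 0 < gam -> subdiff g a v ->
  is_prox (fconj g) gam^-1 (gam^-1 *: a) z ->
  [/\ fconj g z \is a fin_num, dot z z <= dot v v &
     fine (g a) - gam / 2 * dot v v <= dot z a - fine (fconj g z) - gam / 2 * dot z z].
Proof.
move=> gam0 sv zprox.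
have ga := sv.1.
have yz := fenchel_young z a.
have := zprox v; rewrite (fconj_subdiff sv) !prox_penaltyE ?gt_eqF //.
rewrite -(fineK ga) in yz * => zv.
have fz : fconj g z \is a fin_num.
  rewrite fin_numE; apply/andP; split; apply/eqP => fzoo.
    by move: yz; rewrite fzoo -EFinB leeNy_eq.
  by move: zv; rewrite fzoo addye // -EFinB -EFinD leye_eq.
rewrite -(fineK fz) -EFinB lee_fin in yz.
rewrite -(fineK fz) -EFinB -!EFinD lee_fin in zv.
by split => //; nra.
Qed.

End FenchelConjugate.

Lemma ereal_between (R : realType) (x y : \bar R) :
  (x < y)%E -> exists r : R, (x < r%:E < y)%E.
Proof.
case: x => [x| |]; case: y => [y| |] //= xy.
- by rewrite lte_fin in xy; exists ((x + y) / 2); rewrite !lte_fin !midf_lt.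
- by exists (x + 1); rewrite lte_fin ltrDl ltr01 ltry.
- by exists (y - 1); rewrite ltNyr lte_fin gtrBl ltr01.
- by exists 0; rewrite ltNyr ltry.
Qed.

Section LowerSemicontinuous.
Variables (T : topologicalType) (R : realType).
Implicit Types phi : T -> \bar R.

Lemma lsc_min_exists phi (r : R) : lower_semicontinuous phi ->
  compact [set y | (phi y <= r%:E)%E] -> (exists y, (phi y < r%:E)%E) ->
  exists p, forall y, (phi p <= phi y)%E.
Proof.
move=> lsc cpt [y0 y0r]; set M := ereal_inf (range phi).
have Mr : (M < r%:E)%E by apply: le_lt_trans y0r; apply: ereal_inf_lbound; exists y0.
pose F := filter_from [set b | (M < b)%E] (fun b => [set y | (phi y < b)%E]).
have FF : ProperFilter F.
  apply: filter_from_proper; last by move=> b /ereal_inf_lt[_ [y _ <-] yb]; exists y.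
  apply: filter_from_filter; first by exists r%:E.
  move=> b1 b2 /= Mb1 Mb2; exists (Order.min b1 b2); first by rewrite /= lt_min Mb1.
  by move=> y /=; rewrite lt_min => /andP[].
have Fr : F [set y | (phi y <= r%:E)%E] by exists r%:E => // y /ltW.
have [p [_ clp]] := cpt F FF Fr.
suff pM : (phi p <= M)%E.
  by exists p => y; apply: le_trans pM _; apply: ereal_inf_lbound; exists y.
rewrite leNgt; apply/negP => /ereal_between[a /andP[Ma ap]].
have [V pV Va] := lsc p a ap.
have Fa : F [set y | (phi y < a%:E)%E] by exists a%:E.
have [w [/= wa /Va aw]] := clp _ _ Fa pV.
by move: (lt_trans aw wa); rewrite ltxx.
Qed.

Lemma lsc_addr_continuous phi (k : T -> R) :
  lower_semicontinuous phi -> continuous k ->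
  lower_semicontinuous (fun y => phi y + (k y)%:E)%E.
Proof.
move=> lsc kc x b bx.
have [e e0 be] : exists2 e : R, 0 < e & ((b - k x + e)%:E < phi x)%E.
  move: bx; case: (phi x) => [r| |] //=; last by exists 1; rewrite ?ltry.
  by rewrite -EFinD lte_fin => br; exists ((r + k x - b) / 2); rewrite ?lte_fin; lra.
have [V xV Vb] := lsc x _ be.
have kx : \forall y \near x, `|k x - k y| < e by exact: cvgr_dist_lt (kc x) _ e0.
exists (V `&` [set y | `|k x - k y| < e]); first exact: filterI.
move=> y [/Vb] + /=; rewrite ltr_norml; case: (phi y) => [r| |] //=.
- by rewrite lte_fin -EFinD lte_fin => ? ?; lra.
- by rewrite addye ?ltry.
Qed.

End LowerSemicontinuous.

Lemma elsc_lower_semicontinuous (R : realType) (m : nat) (phi : 'rV[R]_m -> \bar R) :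
  elsc phi -> lower_semicontinuous phi.
Proof. by move=> lsc x a /lsc xa; exists [set y | (a%:E < phi y)%E]. Qed.

Lemma ge0_of_affine_ge0 (R : realFieldType) (X Y : R) :
  (forall t, 0 < t < 1 -> 0 <= X + t * Y) -> 0 <= X.
Proof.
move=> XtY; rewrite leNgt; apply/negP => X0.
have D0 : 0 < `|Y| - X by rewrite subr_gt0 (lt_le_trans X0).
set t := - X / (2 * (`|Y| - X)).
have tD : t * (2 * (`|Y| - X)) = - X by rewrite mulfVK // mulf_neq0 // gt_eqF.
have t0 : 0 < t by rewrite divr_gt0 ?oppr_gt0 // mulr_gt0.
have t1 : t < 1 by rewrite ltr_pdivrMr ?mulr_gt0 // mul1r; have := normr_ge0 Y; lra.
have := XtY t; rewrite t0 t1 => /(_ isT).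
have := ler_norm Y; nra.
Qed.

Section Moreau.
Variables (R : realType) (m : nat).
Implicit Types a o y : 'rV[R]_m.

Lemma continuous_dot_sub a : continuous (fun y : 'rV[R]_m => dot (y - a) (y - a)).
Proof.
have -> : (fun y : 'rV[R]_m => dot (y - a) (y - a)) =
    (fun y => \big[+%R/0]_(j <- index_enum 'I_m) ((y 0 j - a 0 j) * (y 0 j - a 0 j))).
  by apply: funext => y; rewrite dotE; apply: eq_bigr => j _; rewrite !mxE.
apply: continuous_big; first exact: add_continuous.
move=> j _ y.
have yj : {for y, continuous (fun y : 'rV[R]_m => y 0 j - a 0 j)}.
  apply: (@continuousB _ _ _ (fun y : 'rV[R]_m => y 0 j) (fun=> a 0 j)).
    exact: coord_continuous.
  exact: cst_continuous.
exact: (continuousM yj yj).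
Qed.

Lemma sublevel_compact (phi : 'rV[R]_m -> \bar R) (lb c r : R) o :
  lower_semicontinuous phi -> 0 < c ->
  (forall y, ((lb + c * dot (y - o) (y - o))%:E <= phi y)%E) ->
  compact [set y | (phi y <= r%:E)%E].
Proof.
move=> lsc c0 minor; apply: bounded_closed_compact.
  rewrite /= /bounded_near; near=> M => y /= phiy.
  have yc : dot (y - o) (y - o) <= (r - lb) / c.
    rewrite ler_pdivlMr // mulrC; have := le_trans (minor y) phiy; rewrite lee_fin; lra.
  have yo : enorm (y - o) <= Num.sqrt ((r - lb) / c).
    by rewrite /enorm ler_sqrt // (le_trans (dot_ge0 _) yc).
  rewrite -(subrK o y); apply: le_trans (ler_normD _ _) _.
  apply: le_trans (lerD (le_trans (mx_norm_le_enorm _) yo) (lexx `|o|)) _.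
  by near: M; apply: nbhs_pinfty_ge; rewrite num_real.
have -> : [set y | (phi y <= r%:E)%E] = ~` [set y | (r%:E < phi y)%E].
  by rewrite predeqE => y /=; rewrite leNgt; split => /negP.
exact/open_closedC/(proj1 (lower_semicontinuousP _) lsc).
Unshelve. all: by end_near.
Qed.

Section Minimizer.
Variables (g : 'rV[R]_m -> \bar R) (a0 v0 : 'rV[R]_m).
Hypothesis sv0 : subdiff g a0 v0.

(* Completing the square turns the subgradient inequality at [a0] into a
   quadratic minorant of the Moreau objective, centred at [a - gam v0]. *)
Lemma moreau_quadratic_minorant (gam : R) a y : 0 < gam ->
  ((fine (g a0) + dot v0 (a - a0) - gam / 2 * dot v0 v0
    + (2 * gam)^-1 * dot (y - (a - gam *: v0)) (y - (a - gam *: v0)))%:E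
   <= g y + ((2 * gam)^-1 * dot (y - a) (y - a))%:E)%E.
Proof.
move=> gam0.
have -> : y - (a - gam *: v0) = (y - a) + gam *: v0 by rewrite opprD opprK addrA.
have shift : (2 * gam)^-1 * dot (y - a + gam *: v0) (y - a + gam *: v0)
    = (2 * gam)^-1 * dot (y - a) (y - a) + dot (y - a) v0 + gam / 2 * dot v0 v0.
  by rewrite dotDD !dotZr dotZl; field; rewrite gt_eqF.
have split_v0 : dot v0 (y - a0) = dot v0 (a - a0) + dot (y - a) v0.
  by rewrite !dotBr dotBl (dotC y) (dotC a); ring.
have [ga0 /(_ y)] := sv0; rewrite -(fineK ga0) shift; case: (g y) => [r| |] //=.
- by rewrite -!EFinD !lee_fin split_v0 => ?; lra.
- by rewrite addye ?leey.
Qed.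

Lemma moreau_min_exists (gam : R) a : elsc g -> 0 < gam ->
  exists p, g p \is a fin_num /\
    forall y, (g p + ((2 * gam)^-1 * dot (p - a) (p - a))%:E
               <= g y + ((2 * gam)^-1 * dot (y - a) (y - a))%:E)%E.
Proof.
move=> glsc gam0; set c := (2 * gam)^-1.
pose phi y := (g y + (c * dot (y - a) (y - a))%:E)%E.
have c0 : 0 < c by rewrite invr_gt0 mulr_gt0.
have minor := moreau_quadratic_minorant a ^~ gam0.
have phi_lsc : lower_semicontinuous phi.
  apply: lsc_addr_continuous; first exact: elsc_lower_semicontinuous.
  move=> y; apply: (@continuousM _ _ (fun=> c) (fun y => dot (y - a) (y - a))).
    exact: cst_continuous.
  exact: continuous_dot_sub.
have phia0 : phi a0 = (fine (phi a0))%:E by rewrite /phi -(fineK sv0.1) -EFinD.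
have a0_below : exists y, (phi y < (fine (phi a0) + 1)%:E)%E.
  by exists a0; rewrite [X in (X < _)%E]phia0 lte_fin ltrDl.
have [p pmin] := lsc_min_exists phi_lsc (sublevel_compact phi_lsc c0 minor) a0_below.
exists p; split => //; rewrite fin_numE; apply/andP; split; apply/eqP => gp.
  by have := minor p; rewrite gp.
by move: (pmin a0); rewrite phia0 /phi gp addye // leye_eq.
Qed.

End Minimizer.

Section ProxFconj.
Variable g : 'rV[R]_m -> \bar R.
Hypothesis gcvx : econvex g.

(* First-order optimality along the segment from the minimizer [p] to [w]. *)
Lemma moreau_min_subdiff (gam : R) a p : 0 < gam -> g p \is a fin_num ->
  (forall y, (g p + ((2 * gam)^-1 * dot (p - a) (p - a))%:E
               <= g y + ((2 * gam)^-1 * dot (y - a) (y - a))%:E)%E) ->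
  subdiff g p (gam^-1 *: (a - p)).
Proof.
move=> gam0 gp pmin; split => // w.
set c := (2 * gam)^-1; set d := dot (p - a) (w - p); set N := dot (w - p) (w - p).
have /(_ w) := pmin; rewrite -(fineK gp); case Ew: (g w) => [gw| |]; last 2 first.
- by move=> _; rewrite leey.
- by rewrite addNye -EFinD leeNy_eq.
move=> _; rewrite -EFinD lee_fin.
suff : 0 <= gw - fine (g p) + 2 * c * d.
  have -> : dot (gam^-1 *: (a - p)) (w - p) = - (2 * c * d).
    by rewrite dotZl -opprB dotNl /c /d; field; rewrite gt_eqF.
  lra.
apply: (@ge0_of_affine_ge0 _ _ (c * N)) => t t01; have [t0 _] := andP t01.
have cvx := gcvx w p t01; rewrite Ew -(fineK gp) -!EFinM -EFinD in cvx.
have := le_trans (pmin (t *: w + (1 - t) *: p)) (leeD2r _ cvx); rewrite -(fineK gp).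
have -> : t *: w + (1 - t) *: p - a = (p - a) + t *: (w - p).
  by apply/rowP => i; rewrite !mxE; ring.
rewrite (dotDD (p - a)) !dotZr dotZl -/d -/N -!EFinD lee_fin -/c => ineq.
rewrite /= -(pmulr_rge0 _ t0); nra.
Qed.

Lemma prox_fconj_exists (gam : R) a : elsc g -> (exists a0 v0, subdiff g a0 v0) -> 0 < gam ->
  exists z, is_prox (fconj g) gam^-1 (gam^-1 *: a) z.
Proof.
move=> glsc [a0 [v0 sv0]] gam0.
have [p [gp pmin]] := moreau_min_exists sv0 a glsc gam0.
set z := gam^-1 *: (a - p).
have sz := moreau_min_subdiff gam0 gp pmin.
exists z => w; rewrite (fconj_subdiff sz).
apply: le_trans (leeD2r _ (fenchel_young g w p)).
rewrite -(fineK gp) -!EFinB -!EFinD lee_fin !prox_penaltyE ?gt_eqF //.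
have gap : dot w p + (gam / 2 * dot w w - dot w a)
    - (dot z p + (gam / 2 * dot z z - dot z a)) = gam / 2 * dot (w - z) (w - z).
  rewrite /z !dotBl !dotBr !dotZl !dotZr !dotBl !dotBr (dotC p a) (dotC p w) (dotC a w).
  by field; rewrite gt_eqF.
have : 0 <= gam / 2 * dot (w - z) (w - z) by rewrite mulr_ge0 ?dot_ge0 // divr_ge0 // ltW.
lra.
Qed.

End ProxFconj.

End Moreau.

Lemma exists_geometric_le (R : realType) (a q e : R) : 0 < q < 1 -> 0 < e ->
  exists j, a * q ^+ j <= e.
Proof.
move=> /andP[q0 q1] e0.
have aq0 : geometric a q @ \oo --> 0 by apply: cvg_geometric; rewrite ger0_norm ?ltW.
have /filter_ex[j] : \forall n \near \oo, `|0 - geometric a q n| < e.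
  exact: (cvgr_dist_lt _ _ aq0 _ e0).
rewrite sub0r normrN /= => aqj.
by exists j; apply: le_trans (ltW aqj); exact: ler_norm.
Qed.

Section GeometricDrops.
Variables (R : realType) (q c : R) (u : nat -> R).
Hypotheses (q0 : 0 < q) (q1 : q < 1) (c0 : 0 < c).
Hypothesis u_nonincr : forall k, u k.+1 <= u k.
Hypothesis u_drop : forall k, u k.+1 != u k -> u k.+1 <= q * u k.
Hypothesis u_fixed : forall k, u k <= c -> u k.+1 = u k.

Lemma nonincr_le k k' : (k <= k')%N -> u k' <= u k.
Proof.
move=> /subnK <-; elim: (k' - k)%N => [|d IH]; first by rewrite add0n.
by rewrite addSn; apply: le_trans (u_nonincr _) IH.
Qed.

Lemma const_of_no_drop K0 : (forall k, (K0 <= k)%N -> u k.+1 = u k) ->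
  forall k, (K0 <= k)%N -> u k = u K0.
Proof.
move=> fixed k /subnK <-; elim: (k - K0)%N => [|d IH]; first by rewrite add0n.
by rewrite addSn fixed ?IH // leq_addl.
Qed.

(* If [u] dropped infinitely often it would tend to 0 geometrically and
   eventually fall below [c], where it can no longer drop. *)
Lemma geometric_drops_stabilize : exists K0, forall k, (K0 <= k)%N -> u k = u K0.
Proof.
apply: contrapT => no_const.
have drops K1 : exists2 k, (K1 <= k)%N & u k.+1 != u k.
  apply: contrapT => no_drop; apply: no_const; exists K1; apply: const_of_no_drop.
  by move=> k K1k; apply: contrapT => ukk; apply: no_drop; exists k => //; apply/eqP.
have small i : exists K1, u K1 <= u 0%N * q ^+ i.
  elim: i => [|i [K1 uK1]]; first by exists 0%N; rewrite expr0 mulr1.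
  have [k K1k ukk] := drops K1; exists k.+1.
  apply: le_trans (u_drop ukk) _; rewrite exprS mulrCA ler_pM2l //.
  exact: le_trans (nonincr_le K1k) uK1.
have [i uqi] := exists_geometric_le (u 0%N) (introT andP (conj q0 q1)) c0.
have [K1 uK1] := small i.
have [k K1k /eqP] := drops K1; apply; apply: u_fixed.
exact: le_trans (nonincr_le K1k) (le_trans uK1 uqi).
Qed.

End GeometricDrops.

Section ShrinkRule.
Variables (R : realType) (gk q : R) (j : nat) (b : bool).
Hypotheses (gk0 : 0 < gk) (q0 : 0 < q) (q1 : q < 1).

Let next := if b then gk * q ^+ j * q else gk * q ^+ j.

Lemma shrink_gt0 : 0 < next.
Proof. by rewrite /next; case: b; rewrite ?mulr_gt0 // exprn_gt0. Qed.

Let q_ge0 : 0 <= q. Proof. exact: ltW. Qed.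
Let q_le1 : q <= 1. Proof. exact: ltW. Qed.
Let qj_le1 : q ^+ j <= 1. Proof. exact: exprn_ile1. Qed.

Lemma shrink_le : next <= gk.
Proof.
rewrite /next; case: b; last by rewrite ger_pMr.
by rewrite -mulrA ger_pMr //; apply: mulr_ile1; rewrite ?exprn_ge0.
Qed.

Lemma shrink_drop : next != gk -> next <= q * gk.
Proof.
rewrite /next [q * gk]mulrC; case: b.
  by move=> _; rewrite ler_pM2r // ger_pMr.
case: j qj_le1 => [|i] qi1; first by rewrite expr0 mulr1 eqxx.
by rewrite ler_pM2l // exprS ger_pMr // exprn_ile1.
Qed.

Lemma shrink_fixed : next = gk -> ~~ b /\ j = 0%N.
Proof.
have neq i : gk * q ^+ i.+1 != gk.
  by rewrite lt_eqF // gtr_pMr // exprS (le_lt_trans _ q1) // ger_pMr // exprn_ile1.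
rewrite /next; case: b; first by rewrite -mulrA -exprSr => /eqP; rewrite (negbTE (neq _)).
by case: j => [|i] // /eqP; rewrite (negbTE (neq _)).
Qed.

End ShrinkRule.

Lemma le_min_threshold (R : realType) (eps r gam : R) : 0 < eps -> 0 < r -> 0 < gam ->
  gam <= Num.min (eps / r) (2 * eps / r ^+ 2) ->
  r <= Num.min (eps / gam) (Num.sqrt (2 * eps / gam)).
Proof.
move=> eps0 r0 gam0; rewrite !le_min => /andP[gr gr2].
rewrite ler_pdivlMr // mulrC -ler_pdivlMr // gr /=.
have e2g : 0 <= 2 * eps / gam by rewrite divr_ge0 // ltW // mulr_gt0.
rewrite -(ger0_norm (ltW r0)) -sqrtr_sqr ler_sqrt //.
by rewrite ler_pdivlMr // mulrC -ler_pdivlMr ?exprn_gt0.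
Qed.

Lemma subdiff_norm_lt (R : realType) (m : nat) (g : 'rV[R]_m -> \bar R) u (r : R) :
  (exists z, subdiff g u z) -> dist0_subdiff g u < r ->
  exists2 v, subdiff g u v & enorm v < r.
Proof.
move=> [z0 sz0] ur.
have ne : [set enorm z | z in subdiff g u] !=set0 by exists (enorm z0), z0.
by have [_ [v sv <-] vr] := inf_lt ne ur; exists v.
Qed.

Lemma fsps_setting_alpha (R : realType) (n s p : nat) (S : set 'rV[R]_n)
  (A : 'M[R]_(n, s)) (K : 'M[R]_(n, p)) (g : 'rV[R]_s -> \bar R)
  (h : 'rV[R]_n -> R) (gradh : 'rV[R]_n -> 'rV[R]_n) (L : R)
  (f : 'rV[R]_p -> \bar R) (ell : R) :
  fsps_setting S A K g h gradh L f ell ->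
  exists2 alpha : R, 0 < alpha & forall x, S x -> g (x *m A) \is a fin_num ->
    alpha <= fine (g (x *m A)) + h x.
Proof.
case=> _ _ _ _ [[x1 [Sx1 gx1]] inf0 _ _ _].
set I := ereal_inf _ in inf0.
have I_le x : S x -> (I <= g (x *m A) + (h x)%:E)%E.
  by move=> Sx; apply: ereal_inf_lbound; exists x.
have Ifin : I \is a fin_num.
  rewrite fin_numE gt_eqF ?(lt_trans ltNy0 inf0) //=.
  by rewrite lt_eqF // (le_lt_trans (I_le x1 Sx1)) // lte_add_pinfty ?ltry.
exists (fine I); first by rewrite -lte_fin fineK.
by move=> x Sx gx; rewrite -lee_fin fineK // EFinD fineK // I_le.
Qed.

Section LineSearch.
Variables (R : realType) (n s p : nat) (S : set 'rV[R]_n).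
Variables (A : 'M[R]_(n, s)) (K : 'M[R]_(n, p)).
Variables (g : 'rV[R]_s -> \bar R) (h : 'rV[R]_n -> R) (f : 'rV[R]_p -> \bar R).
Variables (ell alpha q : R).
Hypotheses (gcvx : econvex g) (glsc : elsc g).
Hypothesis hsub : forall x, S x -> exists z, subdiff g (x *m A) z.
Hypothesis hdist : forall x, S x -> dist0_subdiff g (x *m A) <= ell.
Hypothesis fint : forall x, S x -> interior (edom f) (x *m K).
Hypothesis fpos : forall x, S x -> (0 < f (x *m K))%E.
Hypothesis alpha0 : 0 < alpha.
Hypothesis alpha_le : forall x, S x -> g (x *m A) \is a fin_num ->
  alpha <= fine (g (x *m A)) + h x.

Lemma small_subgradient x : S x -> exists2 v, subdiff g (x *m A) v & enorm v < ell + 1.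
Proof.
by move=> Sx; apply: subdiff_norm_lt (hsub Sx) _; rewrite (le_lt_trans (hdist Sx)) ?ltrDl.
Qed.

Lemma prox_fconj_norm_lt x (gam : R) z : S x -> 0 < gam ->
  is_prox (fconj g) gam^-1 (gam^-1 *: (x *m A)) z -> enorm z < ell + 1.
Proof.
move=> Sx gam0 zprox; have [v sv vlt] := small_subgradient Sx.
by have [_ zv _] := prox_fconj_bound gam0 sv zprox; exact: le_lt_trans (enorm_le zv) vlt.
Qed.

Lemma Psi_gt0 x z u (dk gam : R) v : S x -> 0 <= dk -> 0 < gam ->
  subdiff g (x *m A) v -> gam * dot v v <= alpha ->
  is_prox (fconj g) gam^-1 (gam^-1 *: (x *m A)) z ->
  (0 < Psi S A g h x z u dk gam)%E.
Proof.
move=> Sx dk0 gam0 sv small zprox.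
have [fz _ dual] := prox_fconj_bound gam0 sv zprox.
have al := alpha_le Sx sv.1.
have D : 0 <= dk / 2 * enorm (x - u) ^+ 2 by rewrite mulr_ge0 ?divr_ge0 ?sqr_ge0.
rewrite /Psi /Defs.indic asboolT // adde0 -(fineK fz) -EFinB lte_fin (enorm_sqr z).
have := alpha0; lra.
Qed.

Lemma fsps_cond_small x u (dk gk : R) j : S x -> 0 <= dk -> 0 < gk -> 0 < q ->
  gk * q ^+ j <= alpha / (ell + 1) ^+ 2 -> fsps_cond S A K g h f q x u dk gk j.
Proof.
move=> Sx dk0 gk0 q0 small; set gam := gk * q ^+ j.
have gam0 : 0 < gam by rewrite mulr_gt0 // exprn_gt0.
have [v sv vlt] := small_subgradient Sx.
have [z zprox] := prox_fconj_exists gcvx (x *m A) glsc (ex_intro _ _ (ex_intro _ _ sv)) gam0.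
exists z; split => //.
have fx_fin : f (x *m K) \is a fin_num.
  rewrite fin_numE gt_eqF ?(lt_trans ltNy0 (fpos Sx)) //=.
  by have := interior_subset (fint Sx); rewrite /edom /= => /lt_eqF ->.
apply: mule_gt0; last by rewrite lte_fin invr_gt0 -lte_fin fineK ?fpos.
suff gv : gam * dot v v <= alpha by exact: Psi_gt0 Sx dk0 gam0 sv gv zprox.
have ell1 : 0 < ell + 1 by apply: le_lt_trans (enorm_ge0 v) vlt.
rewrite ler_pdivlMr ?exprn_gt0 // in small.
by apply: le_trans small; rewrite ler_pM2l // ltW // dot_lt_sqr.
Qed.

End LineSearch.

Section Run.
Variables (R : realType) (n s p : nat) (S : set 'rV[R]_n).
Variables (A : 'M[R]_(n, s)) (K : 'M[R]_(n, p)).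
Variables (g : 'rV[R]_s -> \bar R) (h : 'rV[R]_n -> R) (gradh : 'rV[R]_n -> 'rV[R]_n).
Variables (L : R) (f : 'rV[R]_p -> \bar R) (ell alpha : R).
Variables (beta nu q eps delta0 theta0 : R) (x0 : 'rV[R]_n) (z0 : 'rV[R]_s) (u0 : 'rV[R]_n).
Hypotheses (gcvx : econvex g) (glsc : elsc g).
Hypothesis hsub : forall x, S x -> exists z, subdiff g (x *m A) z.
Hypothesis hdist : forall x, S x -> dist0_subdiff g (x *m A) <= ell.
Hypothesis fint : forall x, S x -> interior (edom f) (x *m K).
Hypothesis fpos : forall x, S x -> (0 < f (x *m K))%E.
Hypothesis alpha0 : 0 < alpha.
Hypothesis alpha_le : forall x, S x -> g (x *m A) \is a fin_num ->
  alpha <= fine (g (x *m A)) + h x.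
Hypotheses (L0 : 0 <= L) (nu0 : 0 < nu) (q0 : 0 < q) (q1 : q < 1).
Hypotheses (delta00 : 0 < delta0) (eps0 : 0 < eps).

Local Notation run := (fsps_run_upto S A K g h gradh L f beta nu q eps delta0 theta0 x0 z0 u0).

Lemma run_upto_pos x z u y j theta delta gamma N :
  run x z u y j theta delta gamma N ->
  forall k, (k <= N)%N -> 0 < gamma k /\ 0 <= delta k.
Proof.
move=> [_ _ _ [_ d0 g0] step]; elim => [|k IH] kN; first by rewrite g0 d0 ltr01 ltW.
have [gk0 _] := IH (ltnW kN).
have [_ _ _ gk1 ->] := step k kN.
have g'0 : 0 < gamma k.+1 by rewrite gk1; exact: shrink_gt0.
split => //; apply: addr_ge0; last by rewrite divr_ge0 ?(ltW g'0) // mulr_ge0 // sqr_ge0.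
by rewrite addr_ge0 // mulr_ge0 // ltW.
Qed.

Lemma fsps_search_terminates :
  forall x z u y j theta delta gamma N,
      run x z u y j theta delta gamma N ->
      forall (y' : 'rV[R]_p) (x' u' : 'rV[R]_n),
        fsps_pre S A K gradh f beta (x N) (z N) (u N) (theta N) (delta N) y' x' u' ->
        exists jN : nat, fsps_cond S A K g h f q x' u' (delta N) (gamma N) jN.
Proof.
move=> x z u y j theta delta gamma N r y' x' u' [_ [Sx' _] _].
have [gN0 dN0] := run_upto_pos r (leqnn N).
have c0 : 0 < alpha / (ell + 1) ^+ 2.
  have ell1 : 0 < ell + 1.
    by have [v _ /(le_lt_trans (enorm_ge0 v))] := small_subgradient hsub hdist Sx'.
  by rewrite divr_gt0 // exprn_gt0.
have [jN small] := exists_geometric_le (gamma N) (introT andP (conj q0 q1)) c0.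
by exists jN; apply: fsps_cond_small small.
Qed.

Variables (x : nat -> 'rV[R]_n) (z : nat -> 'rV[R]_s) (u : nat -> 'rV[R]_n).
Variables (y : nat -> 'rV[R]_p) (j : nat -> nat) (theta delta gamma : nat -> R).
Hypothesis run_all : forall N, run x z u y j theta delta gamma N.

Lemma run_step k : fsps_step S A K g h gradh L f beta nu q eps
  (x k) (z k) (u k) (theta k) (delta k) (gamma k)
  (y k.+1) (x k.+1) (z k.+1) (u k.+1) (j k) (theta k.+1) (delta k.+1) (gamma k.+1).
Proof. by have [_ _ _ _ step] := run_all k.+1; exact: step. Qed.

Lemma gamma_gt0 k : 0 < gamma k.
Proof. exact: (run_upto_pos (run_all k) (leqnn k)).1. Qed.

Lemma delta_ge0 k : 0 <= delta k.
Proof. exact: (run_upto_pos (run_all k) (leqnn k)).2. Qed.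

Lemma z_norm_lt k : enorm (z k.+1) < ell + 1.
Proof.
have [[_ [Sx _] _] _ [zprox _] _ _] := run_step k.
have gkj0 : 0 < gamma k * q ^+ j k by rewrite mulr_gt0 ?gamma_gt0 ?exprn_gt0.
exact: (prox_fconj_norm_lt hsub hdist Sx gkj0 zprox).
Qed.

Lemma gamma_nonincr k : gamma k.+1 <= gamma k.
Proof. by have [_ _ _ -> _] := run_step k; exact: shrink_le (gamma_gt0 k) q0 q1. Qed.

Lemma gamma_drop k : gamma k.+1 != gamma k -> gamma k.+1 <= q * gamma k.
Proof. by have [_ _ _ -> _] := run_step k; exact: shrink_drop (gamma_gt0 k) q0 q1. Qed.

Lemma z_norm_le_of_fixed k : gamma k.+1 = gamma k ->
  enorm (z k.+1) <= Num.min (eps / gamma k) (Num.sqrt (2 * eps / gamma k)).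
Proof.
have [_ _ _ gk1 _] := run_step k; rewrite gk1 => /(shrink_fixed (gamma_gt0 k) q0 q1)[].
by rewrite -leNgt => + jk0; rewrite jk0 expr0 mulr1.
Qed.

Local Notation threshold :=
  (Num.min (alpha / (ell + 1) ^+ 2) (Num.min (eps / (ell + 1)) (2 * eps / (ell + 1) ^+ 2))).

Lemma gamma_fixed_small k : gamma k <= threshold -> gamma k.+1 = gamma k.
Proof.
rewrite le_min => /andP[small_search small_shrink].
have [[_ [Sx _] _] [_ minimal] _ gk1 _] := run_step k.
have gk0 := gamma_gt0 k.
have ell1 : 0 < ell + 1 by apply: le_lt_trans (z_norm_lt k); exact: enorm_ge0.
have jk0 : j k = 0%N.
  case: (j k) minimal => // i /(_ 0%N isT) not_cond0; exfalso; apply: not_cond0.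
  by apply: (fsps_cond_small (ell := ell) (alpha := alpha)); rewrite ?expr0 ?mulr1 ?delta_ge0.
move: gk1; rewrite jk0 expr0 mulr1 ifN // -leNgt.
apply: le_trans (ltW (z_norm_lt k)) _.
by apply: le_min_threshold; rewrite ?min_le.
Qed.

Lemma fsps_gamma_stabilizes : exists gam : R, 0 < gam /\ exists K0 : nat,
  forall k, (K0 <= k)%N ->
    [/\ gamma k = gam, delta k = 2 * nu + L + 2 * opnorm A ^+ 2 / gam
      & enorm (z k.+1) <= Num.min (eps / gam) (Num.sqrt (2 * eps / gam))].
Proof.
have ell1 : 0 < ell + 1 by apply: le_lt_trans (z_norm_lt 0); exact: enorm_ge0.
have c0 : 0 < threshold by rewrite !lt_min !divr_gt0 ?mulr_gt0 ?exprn_gt0.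
have [K0 const] :=
  geometric_drops_stabilize q0 q1 c0 gamma_nonincr gamma_drop gamma_fixed_small.
exists (gamma K0); split; first exact: gamma_gt0.
exists K0.+1 => k K0k; have gk := const k (ltnW K0k); split => //.
- case: k K0k {gk} => // k K0k.
  by have [_ _ _ _ ->] := run_step k; rewrite const // ltnW.
- by rewrite -gk; apply: z_norm_le_of_fixed; rewrite gk const // leqW // ltnW.
Qed.

End Run.

Unset Implicit Arguments. Set Strict Implicit. Set Printing Implicit Defensive.

Theorem lemma4p3 (R : realType) (n s p : nat) (S : set 'rV[R]_n)
  (A : 'M[R]_(n, s)) (K : 'M[R]_(n, p)) (g : 'rV[R]_s -> \bar R)
  (h : 'rV[R]_n -> R) (gradh : 'rV[R]_n -> 'rV[R]_n) (L : R)
  (f : 'rV[R]_p -> \bar R) (ell : R)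
  (beta nu q delta0 theta0 eps : R)
  (x0 : 'rV[R]_n) (z0 : 'rV[R]_s) (u0 : 'rV[R]_n) :
  fsps_setting S A K g h gradh L f ell ->
  0 < beta < 2 -> 0 < nu -> 0 < q < 1 -> 0 < delta0 -> 0 < theta0 -> 0 < eps ->
  S x0 ->
  (* (ii), first part: the search for j_k terminates at every iteration *)
  (forall (x : nat -> 'rV[R]_n) (z : nat -> 'rV[R]_s) (u : nat -> 'rV[R]_n)
          (y : nat -> 'rV[R]_p) (j : nat -> nat) (theta delta gamma : nat -> R)
          (N : nat),
      fsps_run_upto S A K g h gradh L f beta nu q eps delta0 theta0 x0 z0 u0
        x z u y j theta delta gamma N ->
      forall (y' : 'rV[R]_p) (x' u' : 'rV[R]_n),
        fsps_pre S A K gradh f beta (x N) (z N) (u N) (theta N) (delta N) y' x' u' ->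
        exists jN : nat, fsps_cond S A K g h f q x' u' (delta N) (gamma N) jN)
  /\
  (forall (x : nat -> 'rV[R]_n) (z : nat -> 'rV[R]_s) (u : nat -> 'rV[R]_n)
          (y : nat -> 'rV[R]_p) (j : nat -> nat) (theta delta gamma : nat -> R),
      (forall N, fsps_run_upto S A K g h gradh L f beta nu q eps delta0 theta0 x0 z0 u0
                   x z u y j theta delta gamma N) ->
      (* (i) *)
      (forall k, enorm (z k.+1) <= ell + 1)
      (* (ii), second part *)
      /\ (forall k, gamma k.+1 <= gamma k)
      (* (iii) *)
      /\ (exists gam : R, 0 < gam /\ exists K0 : nat, forall k, (K0 <= k)%N ->
            [/\ gamma k = gam,
                delta k = 2 * nu + L + 2 * opnorm A ^+ 2 / gam
              & enorm (z k.+1) <= Num.min (eps / gam) (Num.sqrt (2 * eps / gam))])).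
Proof.
move=> setting _ nu0 /andP[q0 q1] delta00 _ eps0 _.
have [_ [_ [gcvx glsc]] [_ [_ [_ [_ [L0 _]]]]] [_ [_ [_ [fint fpos]]]] [_ _ hsub _ hdist]]
  := setting.
have [alpha alpha0 alpha_le] := fsps_setting_alpha setting.
split; first exact: (fsps_search_terminates gcvx glsc hsub hdist fint fpos alpha0 alpha_le
                        L0 nu0 q0 q1 delta00).
move=> x z u y j theta delta gamma run_all; split; [|split].
- by move=> k; exact/ltW/(z_norm_lt hsub hdist L0 nu0 q0 delta00 run_all).
- exact: (gamma_nonincr L0 nu0 q0 q1 delta00 run_all).
- exact: (fsps_gamma_stabilizes gcvx glsc hsub hdist fint fpos alpha0 alpha_le
            L0 nu0 q0 q1 delta00 eps0 run_all).
Qed.
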